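(* Let $(G,\cdot,D,\star)$ be an invariant probabilistic metric group. Then $\delta_a\odot\delta_b=\delta_{ab}$ for all $a,b\in G$.
   Context: A distribution function is a nondecreasing, left-continuous function $F:[-\infty,+\infty]\to[0,1]$ with $F(-\infty)=0$, $F(+\infty)=1$; $\Delta^+$ is the set of distribution functions with $F(0)=0$, ordered pointwise; $(\Delta^+,\le)$ is a complete lattice with maximum $\mathcal H_0$ ($\mathcal H_0(t)=0$ for $t\le0$, $1$ for $t>0$). A triangle function is a binary operation $\star$ on $\Delta^+$ that is commutative, associative, nondecreasing in each argument, with $F\star\mathcal H_0=F$. A probabilistic metric space $(G,D,\star)$ consists of a set $G$, a triangle function $\star$ and $D:G\times G\to\Delta^+$ with (i) $D(p,q)=\mathcal H_0$ iff $p=q$; (ii) $D(p,q)=D(q,p)$; (iii) $D(p,q)\star D(q,r)\le D(p,r)$. If moreover $(G,\cdot)$ is a group with identity $e$ and $D(pr,qr)=D(rp,rq)=D(p,q)$ for all $p,q,r\in G$, then $(G,\cdot,D,\star)$ is an invariant probabilistic metric group. For $a\in G$, $\delta_a:G\to\Delta^+$ is $\delta_a(y)=D(y,a)$. For maps $f,g:G\to\Delta^+$, the sup-convolution is $(f\odot g)(x)=\sup_{y,z\in G,\ yz=x}f(y)\star g(z)=\sup_{y\in G}f(y)\star g(y^{-1}x)$. *)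

From Stdlib Require Import Reals.
Open Scope R_scope.

(* A distance distribution function is represented by its restriction to the
   finite reals R; its values at -oo and +oo are fixed to 0 and 1 by
   convention and therefore need not be stored. *)
Definition DF := R -> R.

Definition df_le (F G : DF) : Prop := forall t : R, F t <= G t.

Definition left_continuous_at (F : DF) (t : R) : Prop :=
  forall eps : R, 0 < eps -> exists d : R, 0 < d /\
    forall s : R, t - d < s < t -> Rabs (F s - F t) < eps.

Definition Delta_plus (F : DF) : Prop :=
  (forall t : R, 0 <= F t <= 1) /\
  (forall s t : R, s <= t -> F s <= F t) /\
  (forall t : R, left_continuous_at F t) /\
  F 0 = 0.

Definition H0 : DF := fun t => if Rle_dec t 0 then 0 else 1.

Definition triangle_function (star : DF -> DF -> DF) : Prop :=
  (forall F G, Delta_plus F -> Delta_plus G -> Delta_plus (star F G)) /\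
  (forall F G, Delta_plus F -> Delta_plus G -> star F G = star G F) /\
  (forall F G K, Delta_plus F -> Delta_plus G -> Delta_plus K ->
     star F (star G K) = star (star F G) K) /\
  (forall F F' G, Delta_plus F -> Delta_plus F' -> Delta_plus G ->
     df_le F F' -> df_le (star F G) (star F' G)) /\
  (forall F G G', Delta_plus F -> Delta_plus G -> Delta_plus G' ->
     df_le G G' -> df_le (star F G) (star F G')) /\
  (forall F, Delta_plus F -> star F H0 = F).

Definition is_group {G : Type} (mul : G -> G -> G) (inv : G -> G) (e : G) : Prop :=
  (forall x y z, mul x (mul y z) = mul (mul x y) z) /\
  (forall x, mul e x = x /\ mul x e = x) /\
  (forall x, mul (inv x) x = e /\ mul x (inv x) = e).

Definition PM_space {G : Type} (D : G -> G -> DF) (star : DF -> DF -> DF) : Prop :=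
  triangle_function star /\
  (forall p q, Delta_plus (D p q)) /\
  (forall p q, D p q = H0 <-> p = q) /\
  (forall p q, D p q = D q p) /\
  (forall p q r, df_le (star (D p q) (D q r)) (D p r)).

Definition invariant_PM_group {G : Type} (mul : G -> G -> G) (inv : G -> G) (e : G)
    (D : G -> G -> DF) (star : DF -> DF -> DF) : Prop :=
  is_group mul inv e /\ PM_space D star /\
  (forall p q r, D (mul p r) (mul q r) = D p q /\ D (mul r p) (mul r q) = D p q).

Definition delta {G : Type} (D : G -> G -> DF) (a : G) : G -> DF := fun y => D y a.

Definition is_lub_Delta (S : DF -> Prop) (F : DF) : Prop :=
  Delta_plus F /\
  (forall H, S H -> df_le H F) /\
  (forall U, Delta_plus U -> (forall H, S H -> df_le H U) -> df_le F U).

(* h = f (.) g  (sup-convolution): for every x, h x is the supremum in Delta^+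
   of { f y * g z | y z = x }. *)
Definition is_sup_conv {G : Type} (mul : G -> G -> G) (star : DF -> DF -> DF)
    (f g h : G -> DF) : Prop :=
  forall x : G,
    is_lub_Delta (fun F => exists y z, mul y z = x /\ F = star (f y) (g z)) (h x).

(* The supremum defining [(delta_a (.) delta_b)(x)] is attained: by invariance
   and the triangle inequality every term [D(y,a) * D(z,b)] with [yz = x] is
   below [D(yz,ab)], and the term with [y = x b^-1], [z = b] equals
   [D(x b^-1, a) * H0 = D(x, ab)]. *)
From Stdlib Require Import Reals.

Lemma is_lub_Delta_greatest (S : DF -> Prop) (F : DF) :
  Delta_plus F -> S F -> (forall H, S H -> df_le H F) -> is_lub_Delta S F.
Proof.
  intros HF SF Hub; split; [exact HF | split; [exact Hub |]].
  intros U _ HU; exact (HU F SF).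
Qed.

Lemma mul_inv_cancel_r {G : Type} {mul : G -> G -> G} {inv : G -> G} {e : G} :
  is_group mul inv e -> forall x b, mul (mul x (inv b)) b = x.
Proof.
  intros [Hass [Hid Hinv]] x b.
  rewrite <- Hass, (proj1 (Hinv b)); exact (proj2 (Hid x)).
Qed.

Section InvariantPMGroup.

Context {G : Type} {mul : G -> G -> G} {inv : G -> G} {e : G}.
Context {D : G -> G -> DF} {star : DF -> DF -> DF}.
Hypothesis HG : invariant_PM_group mul inv e D star.

Lemma star_D_le_D_mul (y z a b : G) :
  df_le (star (D y a) (D z b)) (D (mul y z) (mul a b)).
Proof.
  destruct HG as [_ [[_ [_ [_ [_ Htriangle]]]] Hinvariant]].
  rewrite <- (proj1 (Hinvariant y a z)), <- (proj2 (Hinvariant z b a)).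
  apply Htriangle.
Qed.

Lemma D_mul_eq_star (x a b : G) :
  D x (mul a b) = star (D (mul x (inv b)) a) (D b b).
Proof.
  destruct HG as [Hgroup [[Htri [HD [HD0 _]]] Hinvariant]].
  destruct Htri as [_ [_ [_ [_ [_ Hstar_H0]]]]].
  rewrite (proj2 (HD0 b b) eq_refl), Hstar_H0 by apply HD.
  rewrite <- (proj1 (Hinvariant (mul x (inv b)) a b)).
  now rewrite (mul_inv_cancel_r Hgroup).
Qed.

End InvariantPMGroup.

Theorem proposition10 (G : Type) (mul : G -> G -> G) (inv : G -> G) (e : G)
    (D : G -> G -> DF) (star : DF -> DF -> DF)
    (HG : invariant_PM_group mul inv e D star) :
  forall a b : G, is_sup_conv mul star (delta D a) (delta D b) (delta D (mul a b)).
Proof.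
  intros a b x; unfold delta.
  apply is_lub_Delta_greatest.
  - apply (proj1 (proj2 (proj1 (proj2 HG)))).
  - exists (mul x (inv b)), b; split.
    + exact (mul_inv_cancel_r (proj1 HG) x b).
    + exact (D_mul_eq_star HG x a b).
  - intros H [y [z [<- ->]]]; exact (star_D_le_D_mul HG y z a b).
Qed.
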